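(* Let $G$ be a group with finite generating set $S$ (with $S=S^{-1}$, $e\notin S$). For $n\ge 3$ let $\sigma=(1\,2\,\cdots\,n)\in\mathrm{Sym}(n)$ and $S_{\rm neg}=\{(1\,2),(2\,3),\dots,(n-1\ n),\sigma,\sigma^{-1}\}$. Then for all sufficiently large $n$ there is a map $i\colon G\to G\times\mathrm{Sym}(n)$ which is an isometric embedding for the word metrics of $(G,S)$ and $(G\times\mathrm{Sym}(n),S\boxtimes S_{\rm neg})$, such that $\kappa(i(g))<0$ for all $g\in G$ (curvature with respect to $S\boxtimes S_{\rm neg}$), and such that $d(i(gh),i(g)i(h))\le 1$ for all $g,h\in G$.
   Context: For generating sets $S_1,S_2$ of groups $G_1,G_2$, $S_1\boxtimes S_2=(S_1\times\{e\})\cup(\{e\}\times S_2)$ is the split generating set of $G_1\times G_2$. For a group with finite generating set $S$ ($S=S^{-1}$, $e\notin S$), $|x|$ is word length, $d(x,y)=|x^{-1}y|$, $\mathrm{Av}(g)=\frac{1}{|S|}\sum_{a\in S}|a^{-1}ga|$, and for $g\neq e$ the curvature is $\kappa(g)=\frac{|g|-\mathrm{Av}(g)}{|g|}$. *)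

From HB Require Import structures.
From mathcomp Require Import all_boot all_order all_algebra all_fingroup.
From mathcomp Require Import boolp.
Set Implicit Arguments. Unset Strict Implicit. Unset Printing Implicit Defensive.
Import Order.TTheory GRing.Theory Num.Theory.

Section Words.
Variables (G : eqType) (mul : G -> G -> G) (inv : G -> G) (e : G).

Definition is_group : Prop :=
  [/\ forall x y z, mul x (mul y z) = mul (mul x y) z,
      forall x, mul e x = x,
      forall x, mul x e = x,
      forall x, mul (inv x) x = e &
      forall x, mul x (inv x) = e].

Definition word_prod (l : seq G) : G := foldr mul e l.

Definition generates (S : seq G) : Prop :=
  forall x, exists l : seq G,
    all (fun a => (a \in S) || (inv a \in S)) l /\ word_prod l = x.

Definition has_word_of_len (S : seq G) (x : G) : pred nat :=
  fun n => `[< exists l : seq G, [/\ size l = n, all (fun a => a \in S) l &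
                                     word_prod l = x] >].

(* word length |x| w.r.t. S (0 if x is not a product of elements of S) *)
Definition wlen (S : seq G) (x : G) : nat :=
  match pselect (exists n, has_word_of_len S x n) with
  | left h => ex_minn h
  | right _ => 0
  end.

Definition wdist (S : seq G) (x y : G) : nat := wlen S (mul (inv x) y).

Definition Av (S : seq G) (g : G) : rat :=
  ((\sum_(a <- undup S) (wlen S (mul (mul (inv a) g) a))%:R) /
   (size (undup S))%:R)%R.

(* curvature kappa(g) = (|g| - Av(g)) / |g|, meaningful for g <> e *)
Definition kappa (S : seq G) (g : G) : rat :=
  (((wlen S g)%:R - Av S g) / (wlen S g)%:R)%R.

End Words.

Section Prod.
Variables (G : eqType) (mul : G -> G -> G) (inv : G -> G) (e : G) (n : nat).
Definition pmul (x y : G * {perm 'I_n}) : G * {perm 'I_n} :=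
  (mul x.1 y.1, (x.2 * y.2)%g).
Definition pinv (x : G * {perm 'I_n}) : G * {perm 'I_n} := (inv x.1, (x.2)^-1%g).
Definition pone : G * {perm 'I_n} := (e, 1%g).
Definition split_gen (S1 : seq G) (S2 : seq {perm 'I_n}) : seq (G * {perm 'I_n}) :=
  [seq (a, 1%g) | a <- S1] ++ [seq (e, s) | s <- S2].
End Prod.

(* sigma = (1 2 ... n), the cyclic shift i |-> i+1 mod n (0-based points) *)
Definition sigma_perm (n : nat) : {perm 'I_n} := perm (@ordS_inj n).

(* the adjacent transpositions (1 2), (2 3), ..., (n-1 n) (0-based: (k k+1)) *)
Definition adj_transp (n : nat) : seq {perm 'I_n} :=
  match n return seq {perm 'I_n} with
  | 0 => [::]
  | m.+1 => [seq tperm (inord k : 'I_m.+1) (inord k.+1) | k <- iota 0 m]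
  end.

Definition Sneg (n : nat) : seq {perm 'I_n} :=
  adj_transp n ++ [:: sigma_perm n; (sigma_perm n)^-1%g].

From HB Require Import structures.
From mathcomp Require Import all_boot all_order all_algebra all_fingroup.
From mathcomp Require Import boolp zify.
Import Order.TTheory GRing.Theory Num.Theory.
Set Implicit Arguments. Unset Strict Implicit. Unset Printing Implicit Defensive.

(* The embedding is g |-> (g, sg) with sg the n-cycle.  For a split generating
   set the word length of a pair is the sum of the word lengths of its
   coordinates, so g |-> (g, sg) is an isometry and the defect
   (gh, sg)^-1 (g, sg) (h, sg) = (e, sg) has length 1.  Moreover
   |(g, sg)| = |g| + 1.  Conjugating (g, sg) by a generator (a, 1) shortens it
   by at most 2, conjugating by sg or sg^-1 does not change it, and
   conjugating by an adjacent transposition t gives (g, t sg t) with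
   t sg t outside S_neg and nontrivial (this needs n >= 4), which lengthens it
   by 1.  The n - 1 transpositions outweigh the at most 2|S| lost once
   n > 2|S| + 1, so the average length of the conjugates exceeds |(g, sg)|. *)

Section MonoidWordLength.
Variables (G : eqType) (mul : G -> G -> G) (e : G) (S : seq G).
Hypothesis mulA : forall x y z, mul x (mul y z) = mul (mul x y) z.
Hypothesis mul1x : forall x, mul e x = x.
Hypothesis mulx1 : forall x, mul x e = x.

Local Notation prod := (word_prod mul e).
Local Notation len := (wlen mul e S).

(* [wlen] is 0 on elements that are not products of letters of [S], so the
   lemmas below that bound [wlen] from below assume [representable]. *)
Definition representable (x : G) : Prop := exists k, has_word_of_len mul e S x k.

Lemma word_prod_cat l1 l2 : prod (l1 ++ l2) = mul (prod l1) (prod l2).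
Proof. by elim: l1 => [|a l IH] /=; rewrite ?mul1x // IH mulA. Qed.

Lemma word_prod_filter_neq_e l : prod [seq a <- l | a != e] = prod l.
Proof. by elim: l => [|a l IH] //=; case: eqP => [->|_] /=; rewrite IH ?mul1x. Qed.

Lemma has_word_of_lenP x k :
  reflect (exists l, [/\ size l = k, all (fun a => a \in S) l & prod l = x])
          (has_word_of_len mul e S x k).
Proof. exact: asboolP. Qed.

Lemma representable_word l : all (fun a => a \in S) l -> representable (prod l).
Proof. by move=> Sl; exists (size l); apply/has_word_of_lenP; exists l. Qed.

Lemma wlen_le_size l : all (fun a => a \in S) l -> len (prod l) <= size l.
Proof.
move=> Sl; rewrite /wlen; case: pselect => [h|_] //.
by case: (ex_minnP h) => k _; apply; apply/has_word_of_lenP; exists l.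
Qed.

Lemma minimal_word x : representable x ->
  exists l, [/\ size l = len x, all (fun a => a \in S) l & prod l = x].
Proof.
move=> rx; apply/has_word_of_lenP; rewrite /wlen.
by case: pselect => [h|/(_ rx)//]; case: (ex_minnP h).
Qed.

Lemma wlenM_le x y : representable x -> representable y ->
  len (mul x y) <= len x + len y.
Proof.
move=> /minimal_word[l1 [<- S1 <-]] /minimal_word[l2 [<- S2 <-]].
by rewrite -size_cat -word_prod_cat wlen_le_size // all_cat S1.
Qed.

Lemma wlen_e : len e = 0.
Proof. by apply/eqP; rewrite -leqn0 (wlen_le_size (l := [::])). Qed.

Lemma wlen_gen_le1 a : a \in S -> len a <= 1.
Proof. by move=> Sa; rewrite -[a]mulx1 (wlen_le_size (l := [:: a])) //= Sa. Qed.

Lemma wlen_gen a : a \in S -> a != e -> len a = 1.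
Proof.
move=> Sa ae; apply/eqP; rewrite eqn_leq wlen_gen_le1 //=.
have ra : representable a.
  by rewrite -[a]mulx1; apply: (representable_word (l := [:: a])); rewrite /= Sa.
have [[|b l] [sl _ la]] := minimal_word ra.
- by move: la ae => /= <-; rewrite eqxx.
- by rewrite -sl.
Qed.

Lemma wlen_ge2 x : representable x -> x != e -> x \notin S -> 1 < len x.
Proof.
move=> /minimal_word[[|a [|b l]] [<- Sl <-]] //=; first by rewrite eqxx.
by move: Sl => /= /andP[Sa _]; rewrite mulx1 Sa.
Qed.

End MonoidWordLength.

Section SplitProduct.
Variables (G : eqType) (mul : G -> G -> G) (e : G) (n : nat).
Variables (S : seq G) (SP : seq {perm 'I_n}).
Hypothesis mul1x : forall x, mul e x = x.

Local Notation T := (split_gen e S SP).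
Local Notation prodT := (word_prod (pmul mul (n:=n)) (pone e n)).
Local Notation lenT := (wlen (pmul mul (n:=n)) (pone e n) T).

Lemma mem_split_gen x p :
  ((x, p) \in T) = ((x \in S) && (p == 1%g)) || ((x == e) && (p \in SP)).
Proof.
rewrite mem_cat; congr orb.
  by apply/mapP/andP => [[a Sa [-> ->]]|[Sx /eqP->]]; last exists x.
by apply/mapP/andP => [[s SPs [-> ->]]|[/eqP-> SPp]]; last exists p.
Qed.

Lemma word_prod_pair w :
  prodT w = (word_prod mul e (map fst w), word_prod *%g 1%g (map snd w)).
Proof. by elim: w => [|u w IH] //=; rewrite IH. Qed.

Lemma word_prod_split_gen l1 l2 :
  prodT (split_gen e l1 l2) = (word_prod mul e l1, word_prod *%g 1%g l2).
Proof.
elim: l1 => [|a l IH] /=; last by rewrite IH /pmul /= mul1g.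
by elim: l2 => [|s l IH] //=; rewrite IH /pmul /= mul1x.
Qed.

Lemma split_gen_subset l1 l2 : {subset l1 <= S} -> {subset l2 <= SP} ->
  {subset split_gen e l1 l2 <= T}.
Proof.
move=> sub1 sub2 [x p]; rewrite mem_split_gen mem_cat.
by case/orP=> /mapP[y ly [-> ->]]; rewrite ?(sub1 _ ly) ?(sub2 _ ly) !eqxx ?orbT.
Qed.

Lemma wlen_split_le w : all (fun u => u \in T) w ->
  wlen mul e S (prodT w).1 + wlen *%g 1%g SP (prodT w).2 <= size w.
Proof.
move=> Tw; rewrite word_prod_pair /= -word_prod_filter_neq_e //.
rewrite -(word_prod_filter_neq_e (@mul1g _)).
apply: leq_trans (leq_add (wlen_le_size _ _ _) (wlen_le_size _ _ _)) _.
- apply/allP => x; rewrite mem_filter => /andP[xe /mapP[[y p] wyp /= xy]].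
  by move: (allP Tw _ wyp); rewrite mem_split_gen -xy (negbTE xe) orbF => /andP[].
- apply/allP => p; rewrite mem_filter => /andP[p1 /mapP[[x q] wxq /= pq]].
  by move: (allP Tw _ wxq); rewrite mem_split_gen -pq (negbTE p1) andbF => /andP[].
elim: w Tw => //= -[x p] w IH /andP[]; rewrite mem_split_gen.
case/orP=> /andP[] => [_ /eqP-> | /eqP-> _] /IH; rewrite eqxx /=;
  by case: (_ != _) => /=; lia.
Qed.

Lemma wlen_split_pair x p :
  representable mul e S x -> representable *%g 1%g SP p ->
  lenT (x, p) = wlen mul e S x + wlen *%g 1%g SP p.
Proof.
move=> rx rp; have [l1 [s1 S1 l1x]] := minimal_word rx.
have [l2 [s2 S2 l2p]] := minimal_word rp.
have T12 : all (fun u => u \in T) (split_gen e l1 l2).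
  by apply/allP/split_gen_subset; apply/allP.
have w12 : prodT (split_gen e l1 l2) = (x, p) by rewrite word_prod_split_gen l1x l2p.
apply/eqP; rewrite eqn_leq; apply/andP; split.
  by rewrite -w12 -s1 -s2 (leq_trans (wlen_le_size _ _ T12)) // size_cat !size_map.
have rxp : representable (pmul mul (n:=n)) (pone e n) T (x, p).
  by rewrite -w12; apply: representable_word.
have [w [<- Tw wxp]] := minimal_word rxp.
by move: (wlen_split_le Tw); rewrite wxp.
Qed.

Lemma count_undup_split_gen_fst : count [pred u | u.1 != e] (undup T) <= size S.
Proof.
apply: leq_trans (count_undup _ _) _; rewrite count_cat !count_map.
rewrite -[size S]addn0 leq_add ?count_size // leqn0 eqn0Ngt -has_count.
by apply/hasPn => s _ /=; rewrite eqxx.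
Qed.

Lemma count_undup_split_gen_snd (A : seq {perm 'I_n}) : uniq A -> {subset A <= SP} ->
  size A <= count [pred u | (u.1 == e) && (u.2 \in A)] (undup T).
Proof.
move=> uA sA; rewrite -size_filter -(size_map (fun s => (e, s)) A).
apply: uniq_leq_size; first by rewrite map_inj_uniq // => s1 s2 [].
move=> u /mapP[s As ->]; rewrite mem_filter /= eqxx As.
by rewrite mem_undup mem_split_gen eqxx sA ?orbT.
Qed.

End SplitProduct.

Lemma sigma_permE n (x : 'I_n) : sigma_perm n x = x.+1 %% n :> nat.
Proof. by rewrite permE. Qed.

Lemma sigma_perm_nofix n (x : 'I_n) : 1 < n -> sigma_perm n x != x.
Proof.
move=> n_gt1; apply/eqP => /(congr1 (@nat_of_ord n)); rewrite sigma_permE.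
have := ltn_ord x; rewrite leq_eqVlt => /orP[/eqP xn | xn].
  by rewrite xn modnn; lia.
by rewrite modn_small //; lia.
Qed.

Lemma perm_conj_nofix (T : finType) (p q : {perm T}) x :
  (forall y, p y != y) -> (q^-1 * p * q)%g x != x.
Proof.
move=> p_nofix; rewrite !permM; apply/eqP => qpx.
by move/eqP: (p_nofix ((q^-1)%g x)); apply; rewrite -{2}qpx permK.
Qed.

Lemma adj_transpS m :
  adj_transp m.+1 = [seq tperm (inord k : 'I_m.+1) (inord k.+1) | k <- iota 0 m].
Proof. by []. Qed.

Lemma adj_transp_uniq m : uniq (adj_transp m.+1).
Proof.
rewrite adj_transpS map_inj_in_uniq ?iota_uniq // => k1 k2.
rewrite !mem_iota !add0n => /andP[_ k1m] /andP[_ k2m] t12.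
have [//|k12] := eqVneq k1 k2; exfalso.
have := congr1 (fun t : {perm 'I_m.+1} => nat_of_ord (t (inord k1))) t12.
rewrite /= tpermL; have [k1E|k21] := eqVneq k1 k2.+1.
  by rewrite k1E tpermR !inordK; lia.
rewrite tpermD ?inordK; try lia; apply/eqP => /(congr1 (@nat_of_ord _)); rewrite !inordK; lia.
Qed.

Section AdjacentConjugates.
Variable m : nat.
Hypothesis m_ge3 : 3 <= m.
Local Notation n := m.+1.
Local Notation sg := (sigma_perm n).
Local Notation t k := (tperm (inord k : 'I_n) (inord k.+1)).
Local Notation tau k := (t k * sg * t k)%g.
Local Notation lenP := (wlen *%g 1%g (Sneg n)).

Lemma tau_nofix k x : tau k x != x.
Proof. by rewrite -{1}tpermV perm_conj_nofix // => y; apply: sigma_perm_nofix; lia. Qed.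

Lemma tau_neq_t k j : j < m -> tau k != t j.
Proof.
move=> j_lt; apply/eqP => tau_t.
have [y [yj yj1]] : exists y : 'I_n, nat_of_ord y <> j /\ nat_of_ord y <> j.+1.
  by case: j j_lt {tau_t} => [|j] j_lt; [exists ord_max | exists ord0]; split => /=; lia.
have : t j y = y.
  by apply: tpermD; apply/eqP => /(congr1 (@nat_of_ord _)); rewrite inordK; lia.
by rewrite -tau_t; apply/eqP; exact: tau_nofix.
Qed.

Section Witness.
Variable k : nat.
Hypothesis k_lt : k < m.

(* [xk] is the point k - 1 (mod n): [t k] fixes it and [sg] sends it to k. *)
Let xk : 'I_n := inord (if k == 0 then m else k.-1).

Let xkE : nat_of_ord xk = (if k == 0 then m else k.-1).
Proof. by rewrite inordK //; case: ifP => _; lia. Qed.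

Let sg_xk : sg xk = inord k.
Proof.
apply: val_inj; rewrite /= sigma_permE xkE inordK; last lia.
by case: ifP => /eqP k0; [rewrite k0 modnn | rewrite prednK ?modn_small; lia].
Qed.

Let tau_xk : tau k xk = inord k.+1.
Proof.
rewrite !permM (tpermD (z := xk)) ?sg_xk ?tpermL //;
  apply/eqP => /(congr1 (@nat_of_ord _)); rewrite xkE inordK;
  by case: (boolP (k == 0)) => /= /eqP k0; lia.
Qed.

Lemma tau_neq_sigma : tau k != sg.
Proof.
apply/eqP => /(congr1 (fun p : {perm 'I_n} => nat_of_ord (p xk))).
by rewrite /= tau_xk sg_xk !inordK; lia.
Qed.

(* This needs n >= 4: in Sym(3) every transposition conjugates sg to sg^-1. *)
Lemma tau_neq_sigmaV : tau k != (sg^-1)%g.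
Proof.
apply/eqP => tauE; have : sg (tau k xk) = xk by rewrite tauE permKV.
rewrite tau_xk => /(congr1 (@nat_of_ord _)); rewrite sigma_permE xkE inordK; last lia.
have [k2E|k2n] := eqVneq k.+2 n.
  by rewrite k2E modnn; case: (boolP (k == 0)) => /= /eqP k0; lia.
by rewrite modn_small; [case: (boolP (k == 0)) => /= /eqP k0; lia | lia].
Qed.

End Witness.

Lemma tau_notin_Sneg k : k < m -> tau k \notin Sneg n.
Proof.
move=> k_lt; rewrite mem_cat negb_or; apply/andP; split.
  rewrite adj_transpS; apply/mapP => -[j]; rewrite mem_iota add0n => /andP[_ j_lt] /eqP.
  exact/negP/tau_neq_t.
by rewrite !inE negb_or tau_neq_sigma // tau_neq_sigmaV.
Qed.

Lemma sigma_neq1 : sg != 1%g.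
Proof.
have n_gt1 : 1 < n by lia.
by apply/eqP => sg1; have := sigma_perm_nofix ord0 n_gt1; rewrite sg1 perm1 eqxx.
Qed.

Lemma sigma_in_Sneg : sg \in Sneg n.
Proof. by rewrite mem_cat !inE eqxx orbT. Qed.

Lemma representable_sigma : representable *%g 1%g (Sneg n) sg.
Proof.
by rewrite -[sg]mulg1; apply: (@representable_word _ _ _ _ [:: sg]); rewrite /= sigma_in_Sneg.
Qed.

Lemma Sneg_invg s : s \in Sneg n -> (s^-1)%g \in Sneg n.
Proof.
rewrite mem_cat => /orP[s_adj|].
  move: (s_adj); rewrite adj_transpS => /mapP[k _ sk].
  by rewrite sk tpermV -sk mem_cat s_adj.
by rewrite !inE => /orP[]/eqP->; rewrite mem_cat !inE ?invgK eqxx ?orbT.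
Qed.

Lemma wlen_sigma : lenP sg = 1.
Proof. by apply: wlen_gen; [exact: mulg1 | exact: sigma_in_Sneg | exact: sigma_neq1]. Qed.

Lemma representable_conj_sigma s : s \in Sneg n ->
  representable *%g 1%g (Sneg n) (s^-1 * sg * s)%g.
Proof.
move=> Ss; have -> : (s^-1 * sg * s)%g = word_prod *%g 1%g [:: s^-1; sg; s]%g.
  by rewrite /= mulg1 mulgA.
by apply: representable_word; rewrite /= Sneg_invg // sigma_in_Sneg Ss.
Qed.

Lemma wlen_conj_sigma s : s \in Sneg n ->
  1 + (s \in adj_transp n) <= lenP (s^-1 * sg * s)%g.
Proof.
move=> Ss; have [s_adj|s_adj] := boolP (s \in adj_transp n).
  move: (s_adj); rewrite adj_transpS => /mapP[k].
  rewrite mem_iota add0n => /andP[_ k_lt] sk.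
  have := representable_conj_sigma Ss; rewrite sk tpermV => rep_tau.
  apply: wlen_ge2 => //; [exact: mulg1 | | exact: tau_notin_Sneg].
  by apply/eqP => tau1; have := tau_nofix k ord0; rewrite tau1 perm1 eqxx.
have -> : (s^-1 * sg * s)%g = sg.
  move: Ss; rewrite mem_cat (negbTE s_adj) /= !inE => /orP[]/eqP->.
    by rewrite mulVg mul1g.
  by rewrite invgK mulgK.
by rewrite wlen_sigma.
Qed.

End AdjacentConjugates.

Lemma leq_sum_count (X : eqType) (U : seq X) (f : X -> nat) (a b : pred X) (L : nat) :
  (forall u, u \in U -> L + b u <= f u + 2 * a u) ->
  L * size U + count b U <= \sum_(u <- U) f u + 2 * count a U.
Proof.
elim: U => [|u U IH] fU; first by rewrite big_nil muln0.
rewrite big_cons /= mulnS.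
have := fU u (mem_head _ _).
have := IH (fun v Uv => fU v (mem_behead (s := u :: U) Uv)).
by case: (a u); case: (b u) => /=; lia.
Qed.

Lemma kappa_lt0 (G : eqType) (mul : G -> G -> G) (inv : G -> G) (e : G) (S : seq G) x :
  0 < wlen mul e S x ->
  wlen mul e S x * size (undup S) <
    \sum_(a <- undup S) wlen mul e S (mul (mul (inv a) x) a) ->
  (kappa mul inv e S x < 0)%R.
Proof.
move=> len_gt0 sum_gt; have S_gt0 : 0 < size (undup S).
  by move: sum_gt; case: (undup S) => [|//]; rewrite big_nil muln0.
rewrite /kappa /Av -natr_sum pmulr_llt0 ?invr_gt0 ?ltr0n // subr_lt0.
by rewrite ltr_pdivlMr ?ltr0n // -natrM ltr_nat.
Qed.

Section Group.
Variables (G : eqType) (mul : G -> G -> G) (inv : G -> G) (e : G) (S : seq G).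
Hypothesis HG : is_group mul inv e.
Hypothesis HSsym : forall a, a \in S -> inv a \in S.
Hypothesis HSe : e \notin S.
Hypothesis HSgen : generates mul inv e S.

Let mulA : forall x y z, mul x (mul y z) = mul (mul x y) z. Proof. by case: HG. Qed.
Let mul1x : forall x, mul e x = x. Proof. by case: HG. Qed.
Let mulx1 : forall x, mul x e = x. Proof. by case: HG. Qed.
Let mulVx : forall x, mul (inv x) x = e. Proof. by case: HG. Qed.
Let mulxV : forall x, mul x (inv x) = e. Proof. by case: HG. Qed.

Let invK x : inv (inv x) = x.
Proof. by rewrite -[LHS]mulx1 -(mulVx x) mulA mulVx mul1x. Qed.

Let inv_e : inv e = e.
Proof. by rewrite -[inv e]mul1x mulxV. Qed.

Lemma representable_all x : representable mul e S x.
Proof.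
have [l [Sl <-]] := HSgen x; apply: representable_word.
by apply/allP => a /(allP Sl) /orP[//|/HSsym]; rewrite invK.
Qed.

Lemma wlen_conj_gen a g : a \in S ->
  wlen mul e S g <= wlen mul e S (mul (mul (inv a) g) a) + 2.
Proof.
move=> Sa; set c := mul (mul (inv a) g) a.
have -> : g = mul (mul a c) (inv a) by rewrite /c !mulA mulxV mul1x -mulA mulxV mulx1.
have := wlenM_le mulA mul1x (representable_all (mul a c)) (representable_all (inv a)).
have := wlenM_le mulA mul1x (representable_all a) (representable_all c).
by have := wlen_gen_le1 mulx1 Sa; have := wlen_gen_le1 mulx1 (HSsym Sa); lia.
Qed.

Section Embedding.
Variable m : nat.
Hypothesis m_ge3 : 3 <= m.
Local Notation n := m.+1.
Local Notation T := (split_gen e S (Sneg n)).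
Local Notation mulT := (pmul mul (n:=n)).
Local Notation lenT := (wlen mulT (pone e n) T).
Local Notation distT := (wdist mulT (pinv inv (n:=n)) (pone e n) T).
Local Notation conjT u x := (mulT (mulT (pinv inv u) x) u).

Definition embed (g : G) : G * {perm 'I_n} := (g, sigma_perm n).

Lemma wlenT_pair x p : representable *%g 1%g (Sneg n) p ->
  lenT (x, p) = wlen mul e S x + wlen *%g 1%g (Sneg n) p.
Proof. by move=> rp; apply: wlen_split_pair => //; apply: representable_all. Qed.

Lemma embed_neq1 g : embed g != pone e n.
Proof. by apply/eqP => -[_ /eqP]; apply/negP; exact: sigma_neq1. Qed.

Lemma wlen_embed g : lenT (embed g) = wlen mul e S g + 1.
Proof. by rewrite wlenT_pair ?wlen_sigma //; apply: representable_sigma. Qed.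

Lemma wdist_embed g h : distT (embed g) (embed h) = wdist mul inv e S g h.
Proof.
rewrite /wdist; have -> : mulT (pinv inv (embed g)) (embed h) = (mul (inv g) h, 1%g).
  by rewrite /pmul /= mulVg.
by rewrite wlenT_pair ?wlen_e ?addn0 //; apply: (@representable_word _ _ _ _ [::]).
Qed.

Lemma wdist_embed_mul g h : distT (embed (mul g h)) (mulT (embed g) (embed h)) <= 1.
Proof.
rewrite /wdist; have -> : mulT (pinv inv (embed (mul g h))) (mulT (embed g) (embed h))
                          = (e, sigma_perm n).
  by rewrite /pmul /= mulVx mulKg.
by rewrite wlenT_pair ?wlen_e ?wlen_sigma //; apply: representable_sigma.
Qed.

Lemma wlen_conj_embed_fst a g : a \in S ->
  wlen mul e S g + 1 <= lenT (conjT (a, 1%g) (embed g)) + 2.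
Proof.
move=> Sa; have -> : conjT (a, 1%g) (embed g) = (mul (mul (inv a) g) a, sigma_perm n).
  by rewrite /pmul /= invg1 mul1g mulg1.
rewrite wlenT_pair ?wlen_sigma //; last exact: representable_sigma.
by have := wlen_conj_gen g Sa; lia.
Qed.

Lemma wlen_conj_embed_snd s g : s \in Sneg n ->
  wlen mul e S g + 1 + (s \in adj_transp n) <= lenT (conjT (e, s) (embed g)).
Proof.
move=> Ss; have -> : conjT (e, s) (embed g) = (g, (s^-1 * sigma_perm n * s)%g).
  by rewrite /pmul /= inv_e mul1x mulx1.
rewrite wlenT_pair; last exact: representable_conj_sigma.
by have := wlen_conj_sigma m_ge3 Ss; lia.
Qed.

Hypothesis m_gt : 2 * size S < m.

Lemma sum_wlen_conj_embed g :
  lenT (embed g) * size (undup T) < \sum_(u <- undup T) lenT (conjT u (embed g)).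
Proof.
pose lose := [pred u : G * {perm 'I_n} | u.1 != e].
pose gain := [pred u : G * {perm 'I_n} | (u.1 == e) && (u.2 \in adj_transp n)].
have conj_ge u : u \in undup T ->
    lenT (embed g) + gain u <= lenT (conjT u (embed g)) + 2 * lose u.
  rewrite mem_undup wlen_embed; case: u => x p; rewrite mem_split_gen.
  case/orP=> /andP[] => [Sx /eqP-> | /eqP-> Sp] /=.
    have xe : x != e by apply: contraNneq HSe => <-.
    by rewrite (negbTE xe) /= addn0 muln1; exact: wlen_conj_embed_fst.
  by rewrite eqxx /= muln0 addn0; exact: wlen_conj_embed_snd.
have lose_le : count lose (undup T) <= size S by exact: count_undup_split_gen_fst.
have gain_ge : m <= count gain (undup T).
  have := @count_undup_split_gen_snd _ _ _ S (Sneg n) _ (adj_transp_uniq m).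
  rewrite adj_transpS size_map size_iota -adj_transpS; apply => s s_adj.
  by rewrite mem_cat s_adj.
move: lose_le gain_ge (leq_sum_count conj_ge).
set cl := count lose _; set cg := count gain _; set sum := \sum_(_ <- _) _; lia.
Qed.

Lemma kappa_embed_lt0 g : (kappa mulT (pinv inv (n:=n)) (pone e n) T (embed g) < 0)%R.
Proof. by apply: kappa_lt0; [rewrite wlen_embed addn1 | exact: sum_wlen_conj_embed]. Qed.

End Embedding.

End Group.

Theorem mainTheorem11 (G : eqType) (mul : G -> G -> G) (inv : G -> G) (e : G)
  (HG : is_group mul inv e) (S : seq G)
  (HSsym : forall a, a \in S -> inv a \in S)
  (HSe : e \notin S)
  (HSgen : @generates G mul inv e S) :
  exists N : nat, forall n : nat, (3 <= n)%N -> (N <= n)%N ->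
    exists i : G -> G * {perm 'I_n},
      let T := split_gen e S (Sneg n) in
      (forall g h : G,
          wdist (@pmul G mul n) (@pinv G inv n) (pone e n) T (i g) (i h)
          = wdist mul inv e S g h) /\
      (forall g : G,
          i g != pone e n /\
          (kappa (@pmul G mul n) (@pinv G inv n) (pone e n) T (i g) < 0)%R) /\
      (forall g h : G,
          (wdist (@pmul G mul n) (@pinv G inv n) (pone e n) T
                 (i (mul g h)) (pmul mul (i g) (i h)) <= 1)%N).
Proof.
exists (2 * size S).+4 => -[|m] // _ n_ge.
have m_ge3 : 3 <= m by lia.
have m_gt : 2 * size S < m by lia.
exists (embed m) => T; split; [|split] => g.
- by move=> h; apply: wdist_embed.
- by split; [apply: embed_neq1 | apply: kappa_embed_lt0].
- by move=> h; apply: wdist_embed_mul.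
Qed.
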